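(* Let $Z=\{Z_t:t\ge 0\}$ be a (continuous) fractional Brownian motion with Hurst parameter $H\in(0,1)$, let $\alpha>0$, and put $a_t:=H\,\mathrm{e}^{\alpha t/H}/\alpha$ for $t\in\mathbf{R}$. Define $X^{(D,\alpha)}_t:=\mathrm{e}^{-\alpha t}Z_{a_t}$, $t\in\mathbf{R}$. Then the stationary process $\{X^{(D,\alpha)}_t:t\in\mathbf{R}\}$ is short range dependent for every $H\in(0,1)$, i.e. with $\rho(n):=\mathbf{E}(X^{(D,\alpha)}_iX^{(D,\alpha)}_{i+n})$ (independent of $i$) the limit $\lim_{k\to\infty}\sum_{n=0}^k\rho(n)$ exists.
   Context: A fractional Brownian motion (FBM) with Hurst parameter $H\in(0,1)$ is a centered Gaussian process $Z=\{Z_t:t\ge0\}$ with covariance $\mathbf{E}(Z_tZ_s)=\frac12(t^{2H}+s^{2H}-|t-s|^{2H})$; a continuous version is taken. A stationary second order mean-zero sequence $X=\{X_n\}$ with $\rho_X(n)=\mathbf{E}(X_iX_{i+n})$ is called short range dependent if $\lim_{k\to\infty}\sum_{n=0}^k\rho_X(n)$ exists. *)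

From HB Require Import structures.
From mathcomp Require Import all_boot all_order all_algebra.
From mathcomp Require Import all_classical all_reals all_analysis.
Set Implicit Arguments. Unset Strict Implicit. Unset Printing Implicit Defensive.
Import Order.TTheory GRing.Theory Num.Theory.
Import numFieldNormedType.Exports.
Local Open Scope classical_set_scope.
Local Open Scope ring_scope.

Definition centered_gaussian (d : measure_display) (T : measurableType d)
  (R : realType) (P : probability T R) (Y : T -> R) : Prop :=
  exists s : R, 0 <= s /\
    (if s == 0 then P [set w | Y w != 0] = 0%E
     else forall A : set R, measurable A ->
            P (Y @^-1` A) = normal_prob 0 s A).

(* Z (only its values at t >= 0 matter) is a continuous fractional Brownian
   motion with Hurst parameter H: a centered Gaussian process (every finite
   linear combination of its marginals is centered Gaussian) with covariance
   E(Z_t Z_s) = (t^{2H} + s^{2H} - |t - s|^{2H}) / 2, all of whose paths are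
   continuous on [0, +oo). *)
Definition is_fbm (d : measure_display) (T : measurableType d)
  (R : realType) (P : probability T R) (H : R) (Z : R -> T -> R) : Prop :=
  [/\ forall t, 0 <= t -> measurable_fun setT (Z t),
      forall (n : nat) (t c : 'I_n -> R), (forall i, 0 <= t i) ->
        centered_gaussian P (fun w => \sum_(i < n) c i * Z (t i) w),
      forall t s, 0 <= t -> 0 <= s ->
        ('E_P[fun w => (Z t w * Z s w)%R] =
          ((t `^ (2 * H) + s `^ (2 * H) - `|t - s| `^ (2 * H)) / 2)%:E)%E
    & forall w, {within `[0, +oo[, continuous (fun t => Z t w)}].

Definition lamperti_time (R : realType) (H alpha t : R) : R :=
  H * expR (alpha * t / H) / alpha.

Definition XD (d : measure_display) (T : measurableType d) (R : realType)
  (H alpha : R) (Z : R -> T -> R) (t : R) : T -> R :=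
  fun w => expR (- (alpha * t)) * Z (lamperti_time H alpha t) w.

Definition short_range_dependent (d : measure_display) (T : measurableType d)
  (R : realType) (P : probability T R) (X : int -> T -> R) : Prop :=
  (forall i, X i \in Lfun P 2) /\
  (forall i, ('E_P[X i] = 0)%E) /\
  exists rho : nat -> R,
    (forall (i : int) (n : nat), ('E_P[fun w => (X i w * X (i + n%:Z)%R w)%R] = (rho n)%:E)%E) /\
    cvgn (fun k : nat => \sum_(0 <= n < k.+1) rho n).

From HB Require Import structures.
From mathcomp Require Import all_boot all_order all_algebra.
From mathcomp Require Import all_classical all_reals all_analysis.
From mathcomp Require Import ring lra measurable_realfun.
Set Implicit Arguments. Unset Strict Implicit. Unset Printing Implicit Defensive.
Import Order.TTheory GRing.Theory Num.Theory.
Import numFieldNormedType.Exports.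
Local Open Scope classical_set_scope.
Local Open Scope ring_scope.

(* By the covariance of fBm, E(X_t X_{t+n}) depends on n only:
     rho(n) = (H/alpha)^{2H}/2 * (e^{-alpha n}
              + e^{alpha n} (1 - (1 - e^{-alpha n/H})^{2H})).
   Since 0 < 2H <= 2, we have 1 - (1 - x)^{2H} <= 1 - (1 - x)^2 <= 2x on
   [0, 1], so 0 <= rho(n) is dominated by two geometric sequences of ratios
   e^{-alpha} and e^{alpha (1 - 1/H)}, both < 1 because H < 1.  The means
   vanish because a centered Gaussian Y and -Y have the same distribution
   function. *)

Lemma expr2_le_powR_le1 (R : realType) (b p : R) :
  0 <= b <= 1 -> 0 < p <= 2 -> b ^+ 2 <= b `^ p <= 1.
Proof.
move=> /andP[b0 b1] /andP[p0 p2].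
have [->|bn0] := eqVneq b 0; first by rewrite powR0 ?gt_eqF// expr0n /= lexx ler01.
have b01 : 0 < b <= 1 by rewrite lt_neqAle eq_sym bn0 b0 b1.
by rewrite -powR_mulrn // ger_powR //= -(powRr0 b) ger_powR // ltW.
Qed.

Section lamperti_autocov.
Variables (R : realType) (H a : R).
Hypotheses (H0 : 0 < H) (a0 : 0 < a).

Definition lamperti_autocov (n : nat) : R :=
  (H / a) `^ (2 * H) / 2 *
  (expR (- (a * n%:R)) + expR (a * n%:R)
   - expR (- (a * n%:R)) * (expR (a * n%:R / H) - 1) `^ (2 * H)).

Lemma lamperti_time_ge0 t : 0 <= lamperti_time H a t.
Proof. by rewrite /lamperti_time divr_ge0 ?mulr_ge0 ?expR_ge0 ?ltW. Qed.

Lemma lamperti_time_powR t :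
  lamperti_time H a t `^ (2 * H) = (H / a) `^ (2 * H) * expR (a * t) ^+ 2.
Proof.
rewrite /lamperti_time mulrAC (@powRM _ (H / a) (expR _)) ?divr_ge0 ?expR_ge0 ?ltW //.
by rewrite -expRM -expRM_natl; congr (_ * expR _); field; rewrite gt_eqF.
Qed.

Lemma expR_step_ge1 (n : nat) : 1 <= expR (a * n%:R / H).
Proof.
rewrite -expR0 ler_expR; apply: divr_ge0; last exact: ltW.
by rewrite mulr_ge0 // ltW.
Qed.

Lemma lamperti_time_dist x (n : nat) :
  `|lamperti_time H a x - lamperti_time H a (x + n%:R)| =
  H / a * expR (a * x / H) * (expR (a * n%:R / H) - 1).
Proof.
rewrite distrC.
have -> : lamperti_time H a (x + n%:R) - lamperti_time H a x =
    H / a * expR (a * x / H) * (expR (a * n%:R / H) - 1).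
  by rewrite /lamperti_time mulrDr mulrDl expRD; field; rewrite gt_eqF.
rewrite ger0_norm //; apply: mulr_ge0; last by rewrite subr_ge0 expR_step_ge1.
by rewrite mulr_ge0 ?divr_ge0 ?expR_ge0 // ltW.
Qed.

Lemma lamperti_cov x (n : nat) :
  expR (- (a * x)) * expR (- (a * (x + n%:R))) *
  ((lamperti_time H a x `^ (2 * H) + lamperti_time H a (x + n%:R) `^ (2 * H)
    - `|lamperti_time H a x - lamperti_time H a (x + n%:R)| `^ (2 * H)) / 2)
  = lamperti_autocov n.
Proof.
have e1 : 0 <= expR (a * n%:R / H) - 1 by rewrite subr_ge0 expR_step_ge1.
rewrite lamperti_time_dist !lamperti_time_powR.
have Ha : 0 <= H / a by rewrite divr_ge0 // ltW.
rewrite [X in _ - X]powRM ?(mulr_ge0 Ha (expR_ge0 _)) //.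
rewrite [X in _ - X * _]powRM ?expR_ge0 //.
rewrite -expRM (_ : a * x / H * (2 * H) = a * x + a * x); last by field; rewrite gt_eqF.
rewrite /lamperti_autocov !expRN mulrDr !expRD; field.
have := expR_gt0 (a * x); have := expR_gt0 (a * n%:R).
by move=> /lt0r_neq0 -> /lt0r_neq0 ->.
Qed.

Lemma lamperti_autocovE (n : nat) :
  lamperti_autocov n = (H / a) `^ (2 * H) / 2 *
  (expR (- (a * n%:R)) + expR (a * n%:R) *
     (1 - (1 - expR (- (a * n%:R / H))) `^ (2 * H))).
Proof.
rewrite /lamperti_autocov; congr (_ * _).
have -> : expR (a * n%:R / H) - 1 =
    expR (a * n%:R / H) * (1 - expR (- (a * n%:R / H))).
  by rewrite mulrBr mulr1 expRxMexpNx_1.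
have e1 : 0 <= 1 - expR (- (a * n%:R / H)).
  by rewrite subr_ge0 expR_le1 oppr_le0 -ler_expR expR0 expR_step_ge1.
rewrite powRM ?expR_ge0 // -expRM.
rewrite (_ : a * n%:R / H * (2 * H) = a * n%:R + a * n%:R); last first.
  by field; rewrite gt_eqF.
rewrite expRD !mulrA -expRD addNr expR0 mul1r.
by ring.
Qed.

Lemma lamperti_autocov_bound (n : nat) : H <= 1 ->
  0 <= lamperti_autocov n <=
  geometric ((H / a) `^ (2 * H) / 2) (expR (- a)) n
  + geometric ((H / a) `^ (2 * H)) (expR (a - a / H)) n.
Proof.
move=> H1; rewrite lamperti_autocovE /=.
set K := (H / a) `^ (2 * H); set x := expR (- (a * n%:R / H)).
have K0 : 0 <= K by exact: powR_ge0.
have /andP[x0 x1] : 0 <= x <= 1.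
  by rewrite expR_ge0 expR_le1 oppr_le0 -ler_expR expR0 expR_step_ge1.
have /andP[Bl Bu] : (1 - x) ^+ 2 <= (1 - x) `^ (2 * H) <= 1.
  by apply: expr2_le_powR_le1; rewrite ?mulr_gt0 //; apply/andP; split; lra.
have E0 := expR_ge0 (a * n%:R).
have EX : expR (a * n%:R) * x = expR (a - a / H) ^+ n.
  by rewrite -expRM_natl -expRD; congr expR; ring.
have EN : expR (- (a * n%:R)) = expR (- a) ^+ n.
  by rewrite -expRM_natl; congr expR; ring.
have Ex : expR (a * n%:R) * (1 - (1 - x) `^ (2 * H)) <= expR (a * n%:R) * (2 * x).
  by apply: ler_wpM2l => //; nra.
rewrite -EN -EX; apply/andP; split.
  by rewrite mulr_ge0 ?divr_ge0 ?addr_ge0 ?expR_ge0 ?mulr_ge0 // subr_ge0.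
rewrite mulrDr lerD //.
rewrite (_ : K * (expR (a * n%:R) * x) = K / 2 * (expR (a * n%:R) * (2 * x))).
  by apply: ler_wpM2l; rewrite ?divr_ge0.
by field.
Qed.

Lemma lamperti_autocov_summable : H < 1 ->
  cvgn (fun k : nat => \sum_(0 <= n < k.+1) lamperti_autocov n).
Proof.
move=> H1.
have bound n := lamperti_autocov_bound n (ltW H1).
have : cvgn (series lamperti_autocov).
  apply: (series_le_cvg _ _ (fun n => (andP (bound n)).2)) => [n|n|].
  - by have /andP[] := bound n.
  - by have /andP[/le_trans] := bound n; apply.
  apply: is_cvg_seriesD; apply: is_cvg_geometric_series;
    rewrite ger0_norm ?expR_ge0 // expR_lt1 ?oppr_lt0 //.
  by rewrite subr_lt0 ltr_pdivlMr // -{2}(mulr1 a) ltr_pM2l.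
by move=> /cvg_ex[l ul]; apply: (cvgP l); rewrite (cvg_shiftS (series _)).
Qed.

End lamperti_autocov.

Section normal_symmetry.
Variables (R : realType) (s : R).
Hypothesis s0 : s != 0.

Lemma normal_pdf0N x : normal_pdf 0 s (- x) = normal_pdf 0 s x.
Proof. by rewrite /normal_pdf (negbTE s0) /normal_fun !subr0 sqrrN. Qed.

Lemma normal_prob0_itvNyc r :
  normal_prob 0 s `]-oo, r] = normal_prob 0 s `[(- r), +oo[.
Proof.
rewrite /normal_prob -[in LHS](opprK r) ge0_integration_by_substitutionNy.
- by apply: eq_integral => x _; rewrite /= normal_pdf0N.
- exact/continuous_subspaceT/continuous_normal_pdf.
- by move=> x _; exact: normal_pdf_ge0.
Qed.

Lemma normal_prob0_itvNyo r :
  normal_prob 0 s `]-oo, (- r)[ = normal_prob 0 s `]r, +oo[.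
Proof.
rewrite /normal_prob integral_itv_bndo_bndc; last first.
  by apply/measurable_EFinP/measurable_funTS; exact: measurable_normal_pdf.
rewrite integral_itv_obnd_cbnd; last first.
  by apply/measurable_EFinP/measurable_funTS; exact: measurable_normal_pdf.
by have := normal_prob0_itvNyc (- r); rewrite opprK.
Qed.

End normal_symmetry.

Section symmetric_expectation.
Context d (T : measurableType d) (R : realType) (P : probability T R).

Lemma expectation_eq0_ae (Y : T -> R) : measurable_fun setT Y ->
  P [set w | Y w != 0] = 0%E -> ('E_P[Y] = 0)%E.
Proof.
move=> mY PY0; rewrite unlock.
rewrite (@ae_eq_integral _ _ _ P setT (cst 0%E) (EFin \o Y)) ?integral0 //.
  exact/measurable_EFinP.
exists [set w | Y w != 0]; split => //.
  rewrite (_ : [set w | Y w != 0] = Y @^-1` (~` [set 0])).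
    by rewrite -[_ @^-1` _]setTI; apply: mY => //; apply: measurableC.
  by apply/seteqP; split => w /= /eqP.
by move=> w /= Yw; apply/eqP => Y0; apply: Yw => _; rewrite Y0.
Qed.

Lemma expectation_eq0_symmetric (Y : T -> R) : measurable_fun setT Y ->
  Y \in Lfun P 1 ->
  (forall r, P (Y @^-1` `]-oo, r]) = P (Y @^-1` `[(- r), +oo[)) ->
  (forall r, P (Y @^-1` `]-oo, (- r)[) = P (Y @^-1` `]r, +oo[)) ->
  ('E_P[Y] = 0)%E.
Proof.
move=> mY L1 cdfY ccdfY.
have mNY : measurable_fun setT (\- Y) by exact: measurableT_comp.
have L1N : (\- Y) \in Lfun P 1 by rewrite rpredN.
pose Y' : {RV P >-> R} := mfun_Sub (mem_set mY : Y \in mfun).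
pose NY' : {RV P >-> R} := mfun_Sub (mem_set mNY : (\- Y) \in mfun).
have cdfN : cdf NY' = cdf Y'.
  apply/funext => r; rewrite /cdf /distribution /pushforward /= cdfY.
  by congr (P _); apply/seteqP; split => w /=; rewrite !in_itv /= andbT lerNl.
have ccdfN : ccdf NY' = ccdf Y'.
  apply/funext => r; rewrite /ccdf /distribution /pushforward /= -ccdfY.
  by congr (P _); apply/seteqP; split => w /=; rewrite !in_itv /= andbT ltrNr.
have EN : ('E_P[\- Y] = 'E_P[Y])%E.
  by rewrite (@expectation_cdf_ccdf _ _ _ P NY' L1N) cdfN ccdfN
    -(@expectation_cdf_ccdf _ _ _ P Y' L1).
have : ('E_P[(-1) \o* Y] = 'E_P[Y])%E.
  by rewrite -EN; congr expectation; apply/funext => w /=; rewrite mulrN1.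
rewrite expectationZl //; have := expectation_fin_num L1.
case: ('E_P[Y])%E => [x| |] //= _ /eqP; rewrite -EFinM eqe => /eqP ?.
by congr EFin; lra.
Qed.

Lemma centered_gaussian_expectation0 (Y : T -> R) : measurable_fun setT Y ->
  Y \in Lfun P 1 -> centered_gaussian P Y -> ('E_P[Y] = 0)%E.
Proof.
move=> mY L1 [s [_]]; case: eqP => [_ | /eqP s0] lawY.
  exact: expectation_eq0_ae.
apply: expectation_eq0_symmetric => // r; rewrite !lawY //.
  exact: normal_prob0_itvNyc.
exact: normal_prob0_itvNyo.
Qed.

End symmetric_expectation.

Section fbm.
Context d (T : measurableType d) (R : realType) (P : probability T R).
Variables (H : R) (Z : R -> T -> R).
Hypothesis fbm : is_fbm P H Z.

Lemma fbm_Lfun2 t : 0 <= t -> Z t \in Lfun P 2%:E.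
Proof.
have [mZ _ covZ _] := fbm; move=> t0.
rewrite inE; apply/andP; split; first by rewrite inE /=; exact: mZ.
rewrite inE /= /finite_norm unlock /Lnorm; apply: poweR_lty.
under eq_integral => w _ do
  rewrite abse_EFin poweR_EFin powR_mulrn // -normrX ger0_norm ?sqr_ge0 // expr2.
by have := covZ t t t0 t0; rewrite unlock => ->; exact: ltry.
Qed.

Lemma fbm_Lfun1 t : 0 <= t -> Z t \in Lfun P 1.
Proof. by move=> t0; apply/(Lfun_subset12 _)/fbm_Lfun2; rewrite ?fin_num_measure. Qed.

Lemma fbm_expectation0 t : 0 <= t -> ('E_P[Z t] = 0)%E.
Proof.
have [mZ gaussZ _ _] := fbm; move=> t0.
apply: centered_gaussian_expectation0; first exact: mZ.
  exact: fbm_Lfun1.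
have := gaussZ 1%N (fun=> t) (fun=> 1) (fun=> t0).
by under eq_fun => w do rewrite big_ord1 mul1r.
Qed.

Section lamperti_transform.
Variable alpha : R.
Hypotheses (H0 : 0 < H) (alpha0 : 0 < alpha).

Lemma XD_scale t :
  XD H alpha Z t = expR (- (alpha * t)) \o* Z (lamperti_time H alpha t).
Proof. by apply/funext => w; rewrite /XD /= mulrC. Qed.

Lemma XD_Lfun2 t : XD H alpha Z t \in Lfun P 2%:E.
Proof.
rewrite XD_scale; apply: Lfun_scale; first by rewrite ler1n.
exact/fbm_Lfun2/lamperti_time_ge0.
Qed.

Lemma XD_expectation0 t : ('E_P[XD H alpha Z t] = 0)%E.
Proof.
have at0 := lamperti_time_ge0 H0 alpha0 t.
by rewrite XD_scale expectationZl ?fbm_Lfun1 // fbm_expectation0 // mule0.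
Qed.

Lemma XD_autocov x (n : nat) :
  ('E_P[XD H alpha Z x \* XD H alpha Z (x + n%:R)] =
   (lamperti_autocov H alpha n)%:E)%E.
Proof.
have [_ _ covZ _] := fbm.
rewrite (_ : _ \* _ = (expR (- (alpha * x)) * expR (- (alpha * (x + n%:R))))
    \o* (Z (lamperti_time H alpha x) \* Z (lamperti_time H alpha (x + n%:R)))).
  rewrite expectationZl; last by apply: Lfun2_mul_Lfun1; rewrite fbm_Lfun2 ?lamperti_time_ge0.
  by rewrite covZ ?lamperti_time_ge0 // -EFinM lamperti_cov.
by apply/funext => w; rewrite /XD /=; ring.
Qed.

End lamperti_transform.
End fbm.

Theorem proposition3p1 (d : measure_display) (T : measurableType d)
  (R : realType) (P : probability T R) (H alpha : R) (Z : R -> T -> R) :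
  0 < H -> H < 1 -> 0 < alpha -> is_fbm P H Z ->
  short_range_dependent P (fun i : int => XD H alpha Z (i%:~R)).
Proof.
move=> H0 H1 alpha0 fbm.
split; first by move=> i; exact: XD_Lfun2.
split; first by move=> i; exact: XD_expectation0.
exists (lamperti_autocov H alpha); split; last exact: lamperti_autocov_summable.
by move=> i n; rewrite intrD; exact: XD_autocov.
Qed.
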